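(* Let $G$ be a $2$-generated, simple, complete, torsion-free group in which every proper subgroup is infinite cyclic. Then every maximal cyclic subgroup $Z$ of $G$ is malnormal (i.e. $Z\cap g^{-1}Zg=1$ for all $g\in G\setminus Z$), and $G$ has the unique root property.
   Context: A group is complete if it has trivial center and no outer automorphisms. A group has the unique root property if for all $x,y$ in it and every positive integer $n$, $x^n=y^n$ implies $x=y$. *)

From Stdlib Require Import ZArith.

Record group := Group {
  carrier :> Type;
  mul : carrier -> carrier -> carrier;
  inv : carrier -> carrier;
  one : carrier;
  mulA : forall x y z, mul x (mul y z) = mul (mul x y) z;
  mul1g : forall x, mul one x = x;
  mulVg : forall x, mul (inv x) x = one
}.

Arguments mul {g} _ _.
Arguments inv {g} _.
Arguments one {g}.

Section GroupNotions.
Variable G : group.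

Fixpoint npow (x : G) (n : nat) : G :=
  match n with O => one | S k => mul x (npow x k) end.

Definition zpow (x : G) (n : Z) : G :=
  match n with
  | Z0 => one
  | Zpos p => npow x (Pos.to_nat p)
  | Zneg p => inv (npow x (Pos.to_nat p))
  end.

Definition conj (x g : G) : G := mul (inv g) (mul x g).

Definition subgroup (H : G -> Prop) : Prop :=
  H one /\ (forall x y, H x -> H y -> H (mul x y)) /\ (forall x, H x -> H (inv x)).

Definition set_eq (H K : G -> Prop) : Prop := forall x, H x <-> K x.

Definition trivial_set (H : G -> Prop) : Prop := forall x, H x <-> x = one.

Definition proper (H : G -> Prop) : Prop := exists x, ~ H x.

Definition cyc (a : G) (x : G) : Prop := exists n : Z, x = zpow a n.

Definition generated (S : G -> Prop) (x : G) : Prop :=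
  forall H, subgroup H -> (forall s, S s -> H s) -> H x.

Definition cyclic (H : G -> Prop) : Prop := exists a, set_eq H (cyc a).

Definition infinite_cyclic (H : G -> Prop) : Prop :=
  exists a, set_eq H (cyc a) /\ (forall n : Z, zpow a n = one -> n = 0%Z).

Definition two_generated : Prop :=
  exists a b, forall x, generated (fun s => s = a \/ s = b) x.

Definition normal (N : G -> Prop) : Prop :=
  subgroup N /\ forall x g, N x -> N (conj x g).

Definition simple : Prop :=
  (exists x : G, x <> one) /\
  forall N, normal N -> trivial_set N \/ (forall x, N x).

Definition central (z : G) : Prop := forall x, mul z x = mul x z.

Definition automorphism (f : G -> G) : Prop :=
  (forall x y, f (mul x y) = mul (f x) (f y)) /\
  (forall x y, f x = f y -> x = y) /\ (forall y, exists x, f x = y).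

Definition inner (f : G -> G) : Prop := exists g, forall x, f x = conj x g.

Definition complete : Prop :=
  (forall z, central z -> z = one) /\ (forall f, automorphism f -> inner f).

Definition torsion_free : Prop :=
  forall (x : G) (n : nat), (0 < n)%nat -> npow x n = one -> x = one.

Definition maximal_cyclic (Z : G -> Prop) : Prop :=
  subgroup Z /\ cyclic Z /\
  forall Z', subgroup Z' -> cyclic Z' -> (forall x, Z x -> Z' x) -> set_eq Z' Z.

Definition malnormal (Z : G -> Prop) : Prop :=
  forall g, ~ Z g -> forall x, Z x -> Z (conj x g) -> x = one.

Definition unique_root_property : Prop :=
  forall (x y : G) (n : nat), (0 < n)%nat -> npow x n = npow y n -> x = y.

End GroupNotions.

(* Since the centre is trivial, the centraliser of any y <> 1 is a proper
   nontrivial subgroup, hence infinite cyclic; for y in a maximal cyclic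
   subgroup Z it therefore equals Z.  If 1 <> x lies in Z and in Z^g, then
   Z = C(x) and Z = C(x^g) = C(x)^g, so g normalises Z.  By simplicity the
   normaliser of Z is proper, hence cyclic, hence equal to Z by maximality:
   g lies in Z.  For unique roots, x^n = y^n <> 1 puts x and y in the cyclic
   group C(x^n), so they commute and (x y^-1)^n = 1; torsion-freeness then
   gives x = y. *)

From Stdlib Require Import ZArith Classical.

Arguments conj {G} _ _.
Arguments npow {G} _ _.
Arguments zpow {G} _ _.

Section GroupLemmas.
Variable G : group.
Implicit Types x y z a g h : G.

Lemma mulgV x : mul x (inv x) = one.
Proof.
  rewrite <- (mul1g G (mul x (inv x))), <- (mulVg G (inv x)) at 1.
  rewrite <- mulA, (mulA G (inv x) x), mulVg, mul1g, mulVg. reflexivity.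
Qed.

Lemma mulg1 x : mul x one = x.
Proof. rewrite <- (mulVg G x), mulA, mulgV, mul1g. reflexivity. Qed.

Lemma mulKg a x : mul (inv a) (mul a x) = x.
Proof. rewrite mulA, mulVg, mul1g. reflexivity. Qed.

Lemma mulgI a x y : mul a x = mul a y -> x = y.
Proof. intro E. rewrite <- (mulKg a x), E, mulKg. reflexivity. Qed.

Lemma mulIg a x y : mul x a = mul y a -> x = y.
Proof.
  intro E. rewrite <- (mulg1 x), <- (mulg1 y), <- (mulgV a), !mulA, E.
  reflexivity.
Qed.

Lemma invgK x : inv (inv x) = x.
Proof. apply (mulgI (inv x)). rewrite mulgV, mulVg. reflexivity. Qed.

Lemma invMg x y : inv (mul x y) = mul (inv y) (inv x).
Proof.
  apply (mulgI (mul x y)).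
  rewrite mulgV, <- mulA, (mulA G y), mulgV, mul1g, mulgV. reflexivity.
Qed.

Lemma invg1 : inv (@one G) = one.
Proof. rewrite <- (mul1g G (inv one)). apply mulgV. Qed.

Lemma conjMg x y g : conj (mul x y) g = mul (conj x g) (conj y g).
Proof.
  unfold conj. rewrite !mulA. f_equal. rewrite <- !mulA. do 2 f_equal.
  rewrite (mulA G g), mulgV, mul1g. reflexivity.
Qed.

Lemma conjg1 x : conj x one = x.
Proof. unfold conj. rewrite invg1, mul1g, mulg1. reflexivity. Qed.

Lemma conj1g g : conj one g = one.
Proof. unfold conj. rewrite mul1g, mulVg. reflexivity. Qed.

Lemma conjgM x g h : conj x (mul g h) = conj (conj x g) h.
Proof. unfold conj. rewrite invMg, !mulA. reflexivity. Qed.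

Lemma conjgK x g : conj (conj x g) (inv g) = x.
Proof. rewrite <- conjgM, mulgV, conjg1. reflexivity. Qed.

Lemma conjg_eq1 x g : conj x g = one -> x = one.
Proof. intro E. rewrite <- (conjgK x g), E, conj1g. reflexivity. Qed.

Definition commute x y := mul x y = mul y x.

Lemma commute_sym x y : commute x y -> commute y x.
Proof. unfold commute; auto. Qed.

Lemma commute_refl x : commute x x.
Proof. reflexivity. Qed.

Lemma commute1 x : commute x one.
Proof. unfold commute. rewrite mulg1, mul1g. reflexivity. Qed.

Lemma commuteM x y z : commute x y -> commute x z -> commute x (mul y z).
Proof.
  unfold commute. intros Hy Hz. rewrite mulA, Hy, <- mulA, Hz, mulA. reflexivity.
Qed.

Lemma commuteV x y : commute x y -> commute x (inv y).
Proof.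
  unfold commute. intro E. apply (mulgI y).
  rewrite mulA, <- E, <- mulA, mulgV, mulg1, mulA, mulgV, mul1g. reflexivity.
Qed.

Lemma commuteX x y n : commute x y -> commute x (npow y n).
Proof. intro E. induction n; simpl; [apply commute1 | apply commuteM; auto]. Qed.

Lemma commuteZ x y i : commute x y -> commute x (zpow y i).
Proof.
  intro E. destruct i; simpl;
    [apply commute1 | apply commuteX | apply commuteV, commuteX]; auto.
Qed.

Lemma commute_conj x y g : commute x y -> commute (conj x g) (conj y g).
Proof. unfold commute. intro E. rewrite <- !conjMg, E. reflexivity. Qed.

Lemma npowMn x y n :
  commute x y -> npow (mul x y) n = mul (npow x n) (npow y n).
Proof.
  intro E. induction n; simpl; [rewrite mulg1; reflexivity |].
  rewrite IHn, <- !mulA. f_equal. rewrite !mulA. f_equal.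
  apply commuteX, commute_sym, E.
Qed.

Lemma cyclic_commute H : cyclic G H -> forall u v, H u -> H v -> commute u v.
Proof.
  intros [c Hc] u v Hu Hv. apply Hc in Hu as [i ->]. apply Hc in Hv as [j ->].
  apply commuteZ, commute_sym, commuteZ, commute_refl.
Qed.

Definition cent1 y z := commute z y.

Lemma cent1_subgroup y : subgroup G (cent1 y).
Proof.
  unfold cent1. split; [| split].
  - apply commute_sym, commute1.
  - intros a b Ha Hb. apply commute_sym, commuteM; apply commute_sym; auto.
  - intros a Ha. apply commute_sym, commuteV, commute_sym; auto.
Qed.

Definition normaliser (Z : G -> Prop) h :=
  (forall z, Z z -> Z (conj z h)) /\ (forall z, Z z -> Z (conj z (inv h))).

Lemma normaliser_subgroup Z : subgroup G (normaliser Z).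
Proof.
  split; [| split].
  - split; intros z Zz; rewrite ?invg1, conjg1; auto.
  - intros a b [Ha Ha'] [Hb Hb']. split; intros z Zz.
    + rewrite conjgM; auto.
    + rewrite invMg, conjgM; auto.
  - intros a [Ha Ha']. split; intros z Zz; rewrite ?invgK; auto.
Qed.

Lemma subgroup_sub_normaliser Z : subgroup G Z -> forall z, Z z -> normaliser Z z.
Proof.
  intros [_ [ZM ZV]] z Zz. split; intros w Zw; unfold conj; rewrite ?invgK; auto.
Qed.

Lemma torsion_free_commute_root :
  torsion_free G -> forall x y n, (0 < n)%nat -> commute x y ->
  npow x n = npow y n -> x = y.
Proof.
  intros Htf x y n Hn Cxy Exy.
  assert (Cuy : commute (mul x (inv y)) y).
  { apply commute_sym, commuteM; [apply commute_sym, Cxy |].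
    apply commuteV, commute_refl. }
  assert (Hu : npow (mul x (inv y)) n = one).
  { apply (mulIg (npow y n)). rewrite <- npowMn by exact Cuy.
    rewrite <- mulA, mulVg, mulg1, mul1g. exact Exy. }
  apply (mulIg (inv y)). rewrite (Htf _ n Hn Hu), mulgV. reflexivity.
Qed.

End GroupLemmas.

Arguments commute {G} _ _.
Arguments cent1 {G} _ _.
Arguments normaliser {G} _ _.

Section CyclicCentralisers.
Variable G : group.
Implicit Types x y z g h : G.

Hypothesis center_trivial : forall z : G, central G z -> z = one.
Hypothesis proper_subgroups_cyclic :
  forall H : G -> Prop, subgroup G H -> proper G H -> ~ trivial_set G H ->
  infinite_cyclic G H.

Lemma proper_nontrivial_cyclic H :
  subgroup G H -> proper G H -> (exists x, H x /\ x <> one) -> cyclic G H.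
Proof.
  intros HS HP [x [Hx x1]].
  destruct (proper_subgroups_cyclic H HS HP) as [c [Hc _]].
  - intro T. apply x1, T, Hx.
  - exists c; exact Hc.
Qed.

Lemma cent1_cyclic y : y <> one -> cyclic G (cent1 y).
Proof.
  intro y1. apply proper_nontrivial_cyclic.
  - apply cent1_subgroup.
  - apply NNPP. intro Hn. apply y1, center_trivial. intro x.
    apply NNPP. intro Hx. apply Hn. exists x. intro E. apply Hx, commute_sym, E.
  - exists y. split; [apply commute_refl | exact y1].
Qed.

Lemma maximal_cyclic_cent1 Z y :
  maximal_cyclic G Z -> Z y -> y <> one -> set_eq G (cent1 y) Z.
Proof.
  intros [ZS [ZC Zmax]] Zy y1. apply Zmax.
  - apply cent1_subgroup.
  - apply cent1_cyclic, y1.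
  - intros z Zz. apply (cyclic_commute G Z); auto.
Qed.

Lemma maximal_cyclic_normaliser Z x g :
  maximal_cyclic G Z -> Z x -> x <> one -> Z (conj x g) -> normaliser Z g.
Proof.
  intros HZ Zx x1 Zxg.
  pose proof (maximal_cyclic_cent1 Z x HZ Zx x1) as Cx.
  pose proof (maximal_cyclic_cent1 Z _ HZ Zxg
                (fun E => x1 (conjg_eq1 G x g E))) as Cxg.
  split; intros z Zz.
  - apply Cxg, commute_conj, Cx, Zz.
  - apply Cx. rewrite <- (conjgK G x g). apply commute_conj, Cxg, Zz.
Qed.

Lemma torsion_free_unique_root : torsion_free G -> unique_root_property G.
Proof.
  intros Htf x y n Hn Exy.
  destruct (classic (npow x n = one)) as [E | E].
  - rewrite (Htf x n Hn E). symmetry. apply (Htf y n Hn). congruence.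
  - apply (torsion_free_commute_root G Htf x y n Hn); [| exact Exy].
    apply (cyclic_commute G (cent1 (npow x n)) (cent1_cyclic _ E)).
    + apply commuteX, commute_refl.
    + unfold cent1. rewrite Exy. apply commuteX, commute_refl.
Qed.

Hypothesis G_simple : simple G.

Lemma maximal_cyclic_self_normalising Z :
  maximal_cyclic G Z -> (exists x, Z x /\ x <> one) ->
  forall h, normaliser Z h -> Z h.
Proof.
  intros HZ Znt h Nh. destruct HZ as [ZS [ZC Zmax]].
  destruct (classic (forall g, normaliser Z g)) as [Nall | Nproper].
  - destruct (proj2 G_simple Z) as [T | T]; [| | exact (T h)].
    + split; [exact ZS | intros w g Zw; apply (Nall g), Zw].
    + destruct Znt as [x [Zx x1]]. exfalso. apply x1, T, Zx.
  - apply (Zmax (normaliser Z) (normaliser_subgroup G Z)); [| | exact Nh].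
    + apply proper_nontrivial_cyclic; [apply normaliser_subgroup | |].
      * apply NNPP. intro Hn. apply Nproper. intro g.
        apply NNPP. intro Hg. apply Hn. exists g. exact Hg.
      * destruct Znt as [x [Zx x1]]. exists x.
        split; [apply subgroup_sub_normaliser | ]; assumption.
    + apply subgroup_sub_normaliser, ZS.
Qed.

Lemma maximal_cyclic_malnormal Z : maximal_cyclic G Z -> malnormal G Z.
Proof.
  intros HZ g Zg x Zx Zxg. apply NNPP. intro x1. apply Zg.
  apply (maximal_cyclic_self_normalising Z HZ); [exists x; auto |].
  exact (maximal_cyclic_normaliser Z x g HZ Zx x1 Zxg).
Qed.

End CyclicCentralisers.

Theorem lemma5p3 (G : group) :
  two_generated G -> simple G -> complete G -> torsion_free G ->
  (forall H : G -> Prop, subgroup G H -> proper G H -> ~ trivial_set G H ->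
     infinite_cyclic G H) ->
  (forall Z : G -> Prop, maximal_cyclic G Z -> malnormal G Z) /\
  unique_root_property G.
Proof.
  intros _ Hsimple [Hcentre _] Htf Hcyc. split.
  - intros Z HZ. exact (maximal_cyclic_malnormal G Hcentre Hcyc Hsimple Z HZ).
  - exact (torsion_free_unique_root G Hcentre Hcyc Htf).
Qed.
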